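(* Let $f$ be an LLD meromorphic function on $\mathbb{C}$ whose divisor $\mathrm{Div}(f)=\sum_\rho n_\rho(f)\cdot(\rho)$ has exponent of convergence $\alpha>0$. Let $D$ be the divisor $D=-\sum_\rho\sum_{k\ge0} n_\rho(f)\cdot(\rho-k)$, i.e. $n_\rho(D)=-\sum_{k\ge 0} n_{\rho+k}(f)$. Then $D$ is LLD and has exponent of convergence $\alpha+1$.
   Context: $\mathbb{C}_+=\{\Re s>0\}$; $n_\rho(h)$ denotes the order of the meromorphic function $h$ at $\rho$ (positive for zeros, negative for poles), and $\mathrm{Div}(h)=\sum_\rho n_\rho(h)\cdot(\rho)$. A function is LLD if it has no zeros nor poles in $\mathbb{C}_+$; a divisor is LLD if its support lies in $\{\Re s\le 0\}$. A divisor $D=\sum_\rho n_\rho\cdot(\rho)$ has exponent of convergence $\alpha>0$ if $\|D\|_\alpha=\sum_{\rho\neq0}|n_\rho|\,|\rho|^{-\alpha}<+\infty$. (Note $n_{\rho+k}(f)=0$ once $\rho+k\in\mathbb{C}_+$, so the sums defining $n_\rho(D)$ are finite.) *)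

From Stdlib Require Import Reals ZArith List ClassicalEpsilon.
From Coquelicot Require Import Coquelicot.
Open Scope R_scope.

Definition C_differentiable_at (g : C -> C) (z : C) : Prop :=
  exists L : C, forall eps : R, 0 < eps -> exists delta : R, 0 < delta /\
    forall w : C, 0 < Cmod (w - z) < delta ->
      Cmod (g w - g z - L * (w - z)) <= eps * Cmod (w - z).

Definition holomorphic_on_disc (g : C -> C) (c : C) (r : R) : Prop :=
  forall z : C, Cmod (z - c) < r -> C_differentiable_at g z.

(* h has order n at rho: near rho (rho excluded), h(z) = (z-rho)^n g(z) with
   g holomorphic near rho and g(rho) <> 0.  For n = k - m (k, m : nat) this is
   written without negative powers as h(z) (z-rho)^m = (z-rho)^k g(z). *)
Definition has_order (h : C -> C) (rho : C) (n : Z) : Prop :=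
  exists r : R, 0 < r /\ exists g : C -> C,
    holomorphic_on_disc g rho r /\ g rho <> 0%C /\
    exists k m : nat, n = (Z.of_nat k - Z.of_nat m)%Z /\
      forall z : C, 0 < Cmod (z - rho) < r ->
        (h z * Cpow (z - rho) m = Cpow (z - rho) k * g z)%C.

(* (nonzero) meromorphic function on C: it has an order at every point.
   The values of h at its poles are irrelevant (never used). *)
Definition meromorphic (h : C -> C) : Prop :=
  forall rho : C, exists n : Z, has_order h rho n.

(* n_rho(h): the order of h at rho (well defined for meromorphic h, since the
   order is unique). *)
Definition ord (h : C -> C) (rho : C) : Z :=
  epsilon (inhabits 0%Z) (has_order h rho).

Definition divisor := C -> Z.
Definition Div (h : C -> C) : divisor := ord h.

Definition LLD_fun (h : C -> C) : Prop :=
  forall rho : C, 0 < Re rho -> ord h rho = 0%Z.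
Definition LLD_div (D : divisor) : Prop :=
  forall rho : C, D rho <> 0%Z -> Re rho <= 0.

(* ||D||_alpha = sum_{rho <> 0} |n_rho| |rho|^(-alpha) < +oo, as an unordered
   sum of nonnegative terms: all finite partial sums are bounded. *)
Definition has_exponent_of_convergence (D : divisor) (alpha : R) : Prop :=
  exists M : R, forall l : list C, NoDup l -> (forall rho, In rho l -> rho <> 0%C) ->
    fold_right Rplus 0
      (map (fun rho => IZR (Z.abs (D rho)) / Rpower (Cmod rho) alpha) l) <= M.

(* For an LLD f the terms vanish as
   soon as Re(rho) + k > 0, i.e. for k >= up(-Re rho); we sum k = 0..N(rho)
   with N(rho) = Z.to_nat (up (- Re rho)), which covers all possibly nonzero
   terms. *)
Definition shift_bound (rho : C) : nat := Z.to_nat (up (- Re rho)).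
Definition shifted_divisor (n : divisor) : divisor :=
  fun rho => (- fold_right Z.add 0%Z
                  (map (fun k : nat => n (rho + RtoC (INR k))%C)
                       (seq 0 (S (shift_bound rho)))))%Z.

(** Since [|n_rho(D)| <= sum_k |n_(rho+k)(f)|], reindexing by [s = rho + k] bounds
    [||D||_(alpha+1)] by [sum_s |n_s(f)| sum_k |s - k|^(-alpha-1)].  Every [s] in
    the support of [Div f] has [Re s <= 0], hence [|s - k| >= (|s| + k) / 2], and
    the telescoping mean-value estimate
    [alpha (x+1)^(-alpha-1) <= x^(-alpha) - (x+1)^(-alpha)] bounds the inner sum
    by a multiple of [|s|^(-alpha)].  The multiple is uniform in [s] because a
    divisor of finite exponent of convergence has its support bounded away
    from [0]. *)
From Stdlib Require Import Reals ZArith List FinFun Lra Lia.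
From Coquelicot Require Import Coquelicot.
Open Scope R_scope.

Definition sumR {A : Type} (f : A -> R) (l : list A) : R := fold_right Rplus 0 (map f l).

Section FiniteSums.

Context {A : Type}.

Lemma sumR_cons (f : A -> R) x l : sumR f (x :: l) = f x + sumR f l.
Proof. reflexivity. Qed.

Lemma sumR_nonneg (f : A -> R) l : (forall x, 0 <= f x) -> 0 <= sumR f l.
Proof.
  intros Hf; induction l as [|x l IH]; [apply Rle_refl|].
  rewrite sumR_cons; specialize (Hf x); lra.
Qed.

Lemma sumR_le (f g : A -> R) l :
  (forall x, In x l -> f x <= g x) -> sumR f l <= sumR g l.
Proof.
  induction l as [|x l IH]; intros Hfg; [apply Rle_refl|].
  rewrite !sumR_cons; apply Rplus_le_compat.
  - apply Hfg; left; reflexivity.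
  - apply IH; intros y Hy; apply Hfg; right; exact Hy.
Qed.

Lemma sumR_ext (f g : A -> R) l :
  (forall x, In x l -> f x = g x) -> sumR f l = sumR g l.
Proof.
  intros Hfg; apply Rle_antisym; apply sumR_le; intros x Hx; rewrite (Hfg x Hx); lra.
Qed.

Lemma sumR_app (f : A -> R) l1 l2 : sumR f (l1 ++ l2) = sumR f l1 + sumR f l2.
Proof.
  induction l1 as [|x l1 IH]; simpl app; [unfold sumR; simpl; ring|].
  rewrite !sumR_cons, IH; ring.
Qed.

Lemma sumR_plus (f g : A -> R) l : sumR (fun x => f x + g x) l = sumR f l + sumR g l.
Proof.
  induction l as [|x l IH]; [unfold sumR; simpl; ring|].
  rewrite !sumR_cons, IH; ring.
Qed.

Lemma sumR_scal_l (f : A -> R) c l : sumR (fun x => c * f x) l = c * sumR f l.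
Proof.
  induction l as [|x l IH]; [unfold sumR; simpl; ring|].
  rewrite !sumR_cons, IH; ring.
Qed.

Lemma sumR_scal_r (f : A -> R) c l : sumR (fun x => f x * c) l = sumR f l * c.
Proof.
  rewrite <- (Rmult_comm c), <- sumR_scal_l.
  apply sumR_ext; intros; apply Rmult_comm.
Qed.

Lemma sumR_map {B : Type} (f : B -> R) (g : A -> B) l :
  sumR f (map g l) = sumR (fun x => f (g x)) l.
Proof. unfold sumR; rewrite map_map; reflexivity. Qed.

Lemma sumR_incl (f : A -> R) l1 l2 :
  (forall x, 0 <= f x) -> NoDup l1 -> incl l1 l2 -> sumR f l1 <= sumR f l2.
Proof.
  intros Hf Hnd; revert l2.
  induction Hnd as [|x l1 Hx Hnd IH]; intros l2 Hincl.
  - apply sumR_nonneg; exact Hf.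
  - destruct (in_split x l2 (Hincl x (or_introl eq_refl))) as [u [v ->]].
    assert (Hrest : sumR f l1 <= sumR f (u ++ v)).
    { apply IH; intros y Hy.
      destruct (in_app_or _ _ _ (Hincl y (or_intror Hy))) as [Hu|[<-|Hv]];
        [apply in_or_app; left; exact Hu | contradiction | apply in_or_app; right; exact Hv]. }
    rewrite sumR_app in Hrest; rewrite sumR_cons, sumR_app, sumR_cons; lra.
Qed.

End FiniteSums.

Lemma sumR_swap {A B : Type} (F : A -> B -> R) xs ys :
  sumR (fun x => sumR (F x) ys) xs = sumR (fun y => sumR (fun x => F x y) xs) ys.
Proof.
  induction xs as [|x xs IH].
  - unfold sumR; simpl.
    induction ys as [|y ys IHys]; simpl; [reflexivity | rewrite <- IHys; ring].
  - rewrite sumR_cons, IH, <- sumR_plus; reflexivity.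
Qed.

Lemma sumR_reindex_le {A : Type} (decA : forall x y : A, {x = y} + {x <> y})
    (t : nat -> A -> A) (g : A -> nat -> R) l ks :
  (forall k, Injective (t k)) -> (forall y k, 0 <= g y k) -> NoDup l ->
  sumR (fun x => sumR (fun k => g (t k x) k) ks) l
  <= sumR (fun y => sumR (g y) ks) (nodup decA (flat_map (fun k => map (t k) l) ks)).
Proof.
  intros Ht Hg Hnd.
  rewrite sumR_swap, (sumR_swap g).
  apply sumR_le; intros k Hk.
  rewrite <- (sumR_map (fun y => g y k) (t k)).
  apply sumR_incl.
  - intros y; apply Hg.
  - apply Injective_map_NoDup; [apply Ht | exact Hnd].
  - intros y Hy; apply nodup_In, in_flat_map; exists k; split; assumption.
Qed.

Lemma Rpower_pos x y : 0 < Rpower x y.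
Proof. apply exp_pos. Qed.

Lemma inv_Rpower_pos x y : 0 < / Rpower x y.
Proof. apply Rinv_0_lt_compat, Rpower_pos. Qed.

Lemma inv_Rpower_succ x a : 0 < x -> / Rpower x (a + 1) = / Rpower x a * / x.
Proof. intros Hx; rewrite Rpower_plus, Rpower_1 by exact Hx; apply Rinv_mult. Qed.

Lemma inv_Rpower_sub_ge a x : 0 < a -> 0 < x ->
  a * / Rpower (x + 1) (a + 1) <= / Rpower x a - / Rpower (x + 1) a.
Proof.
  intros Ha Hx.
  set (d := ln (x + 1) - ln x).
  assert (Hd : / (x + 1) <= d).
  { assert (Hexp : exp (- d) = x / (x + 1)).
    { replace (- d) with (ln x + - ln (x + 1)) by (unfold d; ring).
      rewrite exp_plus, exp_Ropp, !exp_ln by lra; reflexivity. }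
    assert (Hineq := exp_ineq1_le (- d)).
    assert (Hq : 1 - x / (x + 1) = / (x + 1)) by (field; lra).
    lra. }
  assert (Hx_pow : / Rpower x a = / Rpower (x + 1) a * exp (a * d)).
  { unfold Rpower, d; rewrite <- !exp_Ropp, <- exp_plus; f_equal; ring. }
  rewrite Hx_pow, inv_Rpower_succ by lra.
  assert (Hexp := exp_ineq1_le (a * d)).
  assert (Hpos := inv_Rpower_pos (x + 1) a).
  assert (a * / (x + 1) <= a * d) by (apply Rmult_le_compat_l; lra).
  nra.
Qed.

Lemma sum_inv_Rpower_shift_le a x K : 0 < a -> 0 < x ->
  sumR (fun k => / Rpower (x + INR k) (a + 1)) (seq 0 K)
  <= / Rpower x (a + 1) + / a * / Rpower x a.
Proof.
  intros Ha; revert x; induction K as [|K IH]; intros x Hx.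
  - assert (H1 := inv_Rpower_pos x (a + 1)).
    assert (H2 : 0 < / a * / Rpower x a)
      by (apply Rmult_lt_0_compat; [apply Rinv_0_lt_compat, Ha | apply inv_Rpower_pos]).
    unfold sumR; simpl; lra.
  - rewrite <- cons_seq, <- seq_shift, sumR_cons, sumR_map, Rplus_0_r.
    rewrite (sumR_ext _ (fun k => / Rpower (x + 1 + INR k) (a + 1))).
    2:{ intros k _; rewrite S_INR; do 2 f_equal; ring. }
    assert (Hstep := inv_Rpower_sub_ge a x Ha Hx).
    assert (Htail := IH (x + 1) ltac:(lra)).
    assert (Hscale : / a * (a * / Rpower (x + 1) (a + 1)) = / Rpower (x + 1) (a + 1))
      by (field; split; [apply Rgt_not_eq, Rpower_pos | lra]).
    assert (/ a * (a * / Rpower (x + 1) (a + 1))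
            <= / a * (/ Rpower x a - / Rpower (x + 1) a))
      by (apply Rmult_le_compat_l; [left; apply Rinv_0_lt_compat, Ha | exact Hstep]).
    lra.
Qed.

Lemma Cmod_sub_nat_ge (s : C) (k : nat) : Re s <= 0 ->
  (Cmod s + INR k) / 2 <= Cmod (s - RtoC (INR k)).
Proof.
  intros Hs.
  assert (Hk := pos_INR k).
  assert (Hmod : Cmod s <= Cmod (s - RtoC (INR k))).
  { unfold Cmod; apply sqrt_le_1_alt.
    destruct s as [x y]; simpl in *; nra. }
  assert (Hre : INR k <= Cmod (s - RtoC (INR k))).
  { eapply Rle_trans; [|apply re_le_Cmod].
    destruct s as [x y]; simpl in *; rewrite Rabs_left1; lra. }
  lra.
Qed.

Definition shift_kernel (a : R) (K : nat) (s : C) : R :=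
  sumR (fun k => / Rpower (Cmod (s - RtoC (INR k))) (a + 1)) (seq 0 K).

(** The [k = 0] term is isolated since [|s|] may vanish (then Rocq's
    [Rpower 0 _] is [1]). *)
Lemma shift_kernel_le a s K : 0 < a -> Re s <= 0 ->
  shift_kernel a (S K) s
  <= / Rpower (Cmod s) (a + 1)
     + Rpower 2 (a + 1) * (1 + / a) * / Rpower (Cmod s + 1) a.
Proof.
  intros Ha Hs.
  set (x := Cmod s + 1).
  assert (Hx : 1 <= x) by (assert (H := Cmod_ge_0 s); unfold x; lra).
  unfold shift_kernel; rewrite <- cons_seq, <- seq_shift, sumR_cons, sumR_map.
  replace (s - RtoC (INR 0))%C with s by (simpl; ring).
  apply Rplus_le_compat_l.
  apply Rle_trans with
    (sumR (fun k => Rpower 2 (a + 1) * / Rpower (x + INR k) (a + 1)) (seq 0 K)).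
  - apply sumR_le; intros k _.
    assert (Hk := pos_INR k).
    assert (Hhalf : (x + INR k) / 2 <= Cmod (s - RtoC (INR (S k)))).
    { replace (x + INR k) with (Cmod s + INR (S k)) by (unfold x; rewrite S_INR; ring).
      apply Cmod_sub_nat_ge, Hs. }
    assert (Hpow : Rpower (x + INR k) (a + 1)
                   = Rpower 2 (a + 1) * Rpower ((x + INR k) / 2) (a + 1)).
    { rewrite Rpower_mult_distr by lra; f_equal; field. }
    rewrite Hpow, Rinv_mult, <- Rmult_assoc, Rinv_r, Rmult_1_l
      by apply Rgt_not_eq, Rpower_pos.
    apply Rinv_le_contravar; [apply Rpower_pos|].
    apply Rle_Rpower_l; lra.
  - rewrite sumR_scal_l, Rmult_assoc.
    apply Rmult_le_compat_l; [left; apply Rpower_pos|].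
    eapply Rle_trans; [apply sum_inv_Rpower_shift_le; lra|].
    rewrite inv_Rpower_succ by lra.
    assert (Hpos := inv_Rpower_pos x a).
    assert (/ x <= 1) by (rewrite <- Rinv_1; apply Rinv_le_contravar; lra).
    nra.
Qed.

Lemma fold_Zadd_map_eq0 {A : Type} (g : A -> Z) l :
  (forall x, In x l -> g x = 0%Z) -> fold_right Z.add 0%Z (map g l) = 0%Z.
Proof.
  induction l as [|x l IH]; intros Hg; [reflexivity|]; simpl.
  rewrite (Hg x (or_introl eq_refl)), IH; [reflexivity|].
  intros y Hy; apply Hg; right; exact Hy.
Qed.

Lemma IZR_abs_fold_Zadd_le {A : Type} (g : A -> Z) l :
  IZR (Z.abs (fold_right Z.add 0%Z (map g l))) <= sumR (fun x => IZR (Z.abs (g x))) l.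
Proof.
  induction l as [|x l IH]; [apply Rle_refl|].
  rewrite sumR_cons; simpl.
  eapply Rle_trans; [apply IZR_le, Z.abs_triangle|].
  rewrite plus_IZR; lra.
Qed.

Lemma LLD_div_Div f : LLD_fun f -> LLD_div (Div f).
Proof.
  intros Hf rho Hne; apply Rnot_lt_le; intros Hre; exact (Hne (Hf rho Hre)).
Qed.

Lemma LLD_div_shifted_divisor n : LLD_div n -> LLD_div (shifted_divisor n).
Proof.
  intros Hn rho Hne; apply Rnot_lt_le; intros Hre; apply Hne.
  unfold shifted_divisor; rewrite fold_Zadd_map_eq0; [reflexivity|].
  intros k _; destruct (Z.eq_dec (n (rho + RtoC (INR k))%C) 0) as [E|E]; [exact E|].
  apply Hn in E; destruct rho as [x y]; unfold Cplus, RtoC, Re in *; simpl in *.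
  assert (Hk := pos_INR k); lra.
Qed.

Lemma exponent_of_convergence_inv_Cmod_bounded D a :
  0 < a -> has_exponent_of_convergence D a ->
  exists c, 0 <= c /\ forall s : C, s <> 0%C -> D s <> 0%Z -> / Cmod s <= c.
Proof.
  intros Ha [M HM]; exists (Rpower M (/ a)); split; [left; apply Rpower_pos|].
  intros s Hs HDs.
  assert (Hsingle : IZR (Z.abs (D s)) / Rpower (Cmod s) a + 0 <= M).
  { apply (HM (s :: nil)); [repeat constructor; intros [] | intros r [<-|[]]; exact Hs]. }
  assert (H1 : 1 <= IZR (Z.abs (D s))) by (apply IZR_le; lia).
  assert (Hpos := inv_Rpower_pos (Cmod s) a).
  assert (Hinv : / Rpower (Cmod s) a <= M) by (unfold Rdiv in Hsingle; nra).
  assert (Hroot : / Cmod s = Rpower (/ Rpower (Cmod s) a) (/ a)).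
  { rewrite <- Rpower_Ropp, Rpower_mult.
    replace (- a * / a) with (- (1)) by (field; lra).
    rewrite Rpower_Ropp, Rpower_1 by (apply Cmod_gt_0, Hs); reflexivity. }
  rewrite Hroot; apply Rle_Rpower_l; [left; apply Rinv_0_lt_compat, Ha | lra].
Qed.

Section ShiftedDivisor.

Variables (n : divisor) (a : R).
Hypotheses (Ha : 0 < a) (Hn : LLD_div n).

Lemma shifted_divisor_abs_le rho K : (shift_bound rho <= K)%nat ->
  IZR (Z.abs (shifted_divisor n rho))
  <= sumR (fun k => IZR (Z.abs (n (rho + RtoC (INR k))%C))) (seq 0 (S K)).
Proof.
  intros HK; unfold shifted_divisor; rewrite Z.abs_opp.
  eapply Rle_trans; [apply IZR_abs_fold_Zadd_le|].
  replace (S K) with (S (shift_bound rho) + (K - shift_bound rho))%nat by lia.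
  rewrite seq_app, sumR_app.
  assert (0 <= sumR (fun k => IZR (Z.abs (n (rho + RtoC (INR k))%C)))
                    (seq (0 + S (shift_bound rho)) (K - shift_bound rho)))
    by (apply sumR_nonneg; intros; apply IZR_le; lia).
  lra.
Qed.

Definition shifts (l : list C) (K : nat) : list C :=
  nodup Ceq_dec (flat_map (fun k => map (fun rho => (rho + RtoC (INR k))%C) l) (seq 0 K)).

Lemma sum_shifted_divisor_le l K :
  NoDup l -> (forall rho, In rho l -> shift_bound rho <= K)%nat ->
  sumR (fun rho => IZR (Z.abs (shifted_divisor n rho)) / Rpower (Cmod rho) (a + 1)) l
  <= sumR (fun s => IZR (Z.abs (n s)) * shift_kernel a (S K) s) (shifts l (S K)).
Proof.
  intros Hnd HK.
  set (w := fun s k => IZR (Z.abs (n s)) * / Rpower (Cmod (s - RtoC (INR k))) (a + 1)).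
  apply Rle_trans with
    (sumR (fun rho => sumR (fun k => w (rho + RtoC (INR k))%C k) (seq 0 (S K))) l).
  - apply sumR_le; intros rho Hrho.
    rewrite (sumR_ext _ (fun k => IZR (Z.abs (n (rho + RtoC (INR k))%C))
                                 * / Rpower (Cmod rho) (a + 1))).
    2:{ intros k _; unfold w; do 4 f_equal; ring. }
    rewrite sumR_scal_r; apply Rmult_le_compat_r; [left; apply inv_Rpower_pos|].
    apply shifted_divisor_abs_le, HK, Hrho.
  - eapply Rle_trans; [apply sumR_reindex_le with (t := fun k rho => (rho + RtoC (INR k))%C)|].
    + intros k x y Hxy.
      replace x with (x + RtoC (INR k) - RtoC (INR k))%C by ring.
      rewrite Hxy; ring.
    + intros s k; apply Rmult_le_pos; [apply IZR_le; lia | left; apply inv_Rpower_pos].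
    + exact Hnd.
    + right; apply sumR_ext; intros s _; unfold w, shift_kernel; apply sumR_scal_l.
Qed.

Section UniformBounds.

Variables (c M : R).
Hypothesis Hc0 : 0 <= c.
Hypothesis Hc : forall s : C, s <> 0%C -> n s <> 0%Z -> / Cmod s <= c.
Hypothesis HM : forall l : list C, NoDup l -> (forall rho, In rho l -> rho <> 0%C) ->
  sumR (fun rho => IZR (Z.abs (n rho)) / Rpower (Cmod rho) a) l <= M.

Lemma shift_kernel_weighted_le (s : C) K : s <> 0%C ->
  IZR (Z.abs (n s)) * shift_kernel a (S K) s
  <= (c + Rpower 2 (a + 1) * (1 + / a)) * (IZR (Z.abs (n s)) / Rpower (Cmod s) a).
Proof.
  intros Hs.
  destruct (Z.eq_dec (n s) 0) as [E|E]; [rewrite E; simpl; lra|].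
  assert (Hr : 0 < Cmod s) by (apply Cmod_gt_0, Hs).
  assert (Hcs := Hc s Hs E).
  assert (Hpos := inv_Rpower_pos (Cmod s) a).
  assert (Hdecay : / Rpower (Cmod s + 1) a <= / Rpower (Cmod s) a).
  { apply Rinv_le_contravar; [apply Rpower_pos | apply Rle_Rpower_l; lra]. }
  assert (HB : 0 <= Rpower 2 (a + 1) * (1 + / a)).
  { apply Rmult_le_pos; [left; apply Rpower_pos|].
    assert (0 < / a) by (apply Rinv_0_lt_compat, Ha); lra. }
  assert (Hkernel : shift_kernel a (S K) s
                    <= (c + Rpower 2 (a + 1) * (1 + / a)) * / Rpower (Cmod s) a).
  { eapply Rle_trans; [apply shift_kernel_le; [exact Ha | apply Hn, E]|].
    rewrite inv_Rpower_succ by exact Hr.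
    assert (/ Rpower (Cmod s) a * / Cmod s <= / Rpower (Cmod s) a * c)
      by (apply Rmult_le_compat_l; lra).
    assert (Rpower 2 (a + 1) * (1 + / a) * / Rpower (Cmod s + 1) a
            <= Rpower 2 (a + 1) * (1 + / a) * / Rpower (Cmod s) a)
      by (apply Rmult_le_compat_l; assumption).
    lra. }
  unfold Rdiv; rewrite (Rmult_comm (IZR _) (/ _)), <- Rmult_assoc, Rmult_comm.
  apply Rmult_le_compat_r; [apply IZR_le; lia | exact Hkernel].
Qed.

Lemma sum_shift_kernel_weighted_le pts K : NoDup pts ->
  sumR (fun s => IZR (Z.abs (n s)) * shift_kernel a (S K) s) pts
  <= IZR (Z.abs (n 0%C)) * (/ Rpower (Cmod 0) (a + 1)
                             + Rpower 2 (a + 1) * (1 + / a) * / Rpower (Cmod 0 + 1) a)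
     + (c + Rpower 2 (a + 1) * (1 + / a)) * M.
Proof.
  intros Hnd.
  set (g := fun s => IZR (Z.abs (n s)) * shift_kernel a (S K) s).
  set (nz := filter (fun s => if Ceq_dec s 0%C then false else true) pts).
  assert (Hg : forall s, 0 <= g s).
  { intros s; apply Rmult_le_pos; [apply IZR_le; lia|].
    apply sumR_nonneg; intros k; left; apply inv_Rpower_pos. }
  assert (Hnz : forall s, In s nz -> s <> 0%C).
  { intros s Hs; apply filter_In in Hs; destruct Hs as [_ Hs].
    destruct (Ceq_dec s 0%C); [discriminate | assumption]. }
  apply Rle_trans with (sumR g (RtoC 0 :: nz)).
  { apply sumR_incl; [exact Hg | exact Hnd|].
    intros s Hs; destruct (Ceq_dec s 0%C) as [->|Hne]; [left; reflexivity | right].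
    apply filter_In; split; [exact Hs|]; destruct (Ceq_dec s 0%C); [contradiction | reflexivity]. }
  rewrite sumR_cons; apply Rplus_le_compat.
  - apply Rmult_le_compat_l; [apply IZR_le; lia|].
    apply shift_kernel_le; [exact Ha | simpl; lra].
  - eapply Rle_trans.
    { apply sumR_le; intros s Hs; apply shift_kernel_weighted_le, Hnz, Hs. }
    rewrite sumR_scal_l; apply Rmult_le_compat_l.
    + assert (0 < / a) by (apply Rinv_0_lt_compat, Ha).
      assert (0 < Rpower 2 (a + 1)) by apply Rpower_pos.
      nra.
    + apply HM; [apply NoDup_filter, Hnd | exact Hnz].
Qed.

End UniformBounds.

Lemma has_exponent_of_convergence_shifted_divisor :
  has_exponent_of_convergence n a ->
  has_exponent_of_convergence (shifted_divisor n) (a + 1).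
Proof.
  intros Hexp.
  destruct (exponent_of_convergence_inv_Cmod_bounded n a Ha Hexp) as [c [Hc0 Hc]].
  destruct Hexp as [M HM].
  eexists; intros l Hnd _.
  set (K := list_max (map shift_bound l)).
  assert (HK : forall rho, In rho l -> (shift_bound rho <= K)%nat).
  { intros rho Hrho.
    assert (Hall := proj1 (list_max_le (map shift_bound l) K) (Nat.le_refl K)).
    apply (proj1 (Forall_forall _ _) Hall), in_map, Hrho. }
  eapply Rle_trans; [apply (sum_shifted_divisor_le l K Hnd HK)|].
  apply (sum_shift_kernel_weighted_le c M Hc0 Hc HM), NoDup_nodup.
Qed.

End ShiftedDivisor.

Theorem proposition2p5 (f : C -> C) (alpha : R) :
  0 < alpha ->
  meromorphic f ->
  LLD_fun f ->
  has_exponent_of_convergence (Div f) alpha ->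
  LLD_div (shifted_divisor (Div f)) /\
  has_exponent_of_convergence (shifted_divisor (Div f)) (alpha + 1).
Proof.
  intros Halpha _ Hf Hexp.
  assert (HDiv := LLD_div_Div f Hf).
  split.
  - apply LLD_div_shifted_divisor, HDiv.
  - apply has_exponent_of_convergence_shifted_divisor; assumption.
Qed.
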